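(* For every $T_1,T_2\in\mathcal{T}_n$, if $M(T_1)=M(T_2)$, then $T_1=T_2$ (i.e., they are label-preservingly isomorphic).
   Context: A phylogenetic tree is a finite rooted tree (arcs directed away from the root) with no node of outdegree $1$, whose leaves are injectively labeled. $\mathcal{T}_n$ denotes the set of phylogenetic trees with $n$ leaves labeled $1,\dots,n$, up to label-preserving isomorphism. Internal nodes are the non-leaf nodes; $\mathcal{L}(T)$ is the set of leaves. The height of a node is the length of a longest directed path from it to a leaf. The bottom-up ordering of $T=(V,E)\in\mathcal{T}_n$ is the unique injective map $\ell:V\to\{1,\dots,|V|\}$ such that: (a) for a leaf $v$, $\ell(v)$ is its label; (b) if $\mathrm{height}(u)<\mathrm{height}(v)$ then $\ell(u)<\ell(v)$; (c) if $0<\mathrm{height}(u)=\mathrm{height}(v)$ and $\min\{\ell(x): x \text{ child of } u\}<\min\{\ell(x): x\text{ child of } v\}$ then $\ell(u)<\ell(v)$. The matching representation of $T$ is $M(T)=\{\ell(\mathrm{children}(u)) : u\in V\setminus\mathcal{L}(T)\}$, a partition of $\{1,\dots,|V|-1\}$. *)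

From mathcomp Require Import all_boot.
From mathcomp Require Import finmap.
Set Implicit Arguments. Unset Strict Implicit. Unset Printing Implicit Defensive.
Local Open Scope fset_scope.

(* Nodes form a finite type [pt_V];
   [pt_child u v] means there is an arc u -> v (v is a child of u);
   leaf label i+1 (for i : 'I_n) is carried by the node [pt_leaf i]. *)
Record phylo_tree (n : nat) := PhyloTree {
  pt_V :> finType;
  pt_child : rel pt_V;
  pt_root : pt_V;
  pt_leaf : 'I_n -> pt_V;
  pt_root_noparent : forall u, ~~ pt_child u pt_root;
  pt_parent_unique : forall v, v != pt_root -> exists! u, pt_child u v;
  pt_reach : forall v, connect pt_child pt_root v;
  pt_no_outdeg1 : forall u, #|[set v | pt_child u v]| != 1;
  pt_leaf_inj : injective pt_leaf;
  pt_leaf_leaf : forall i v, ~~ pt_child (pt_leaf i) v;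
  pt_leaf_onto : forall u, (forall v, ~~ pt_child u v) -> exists i, u = pt_leaf i
}.

Section Defs.
Variables (n : nat) (T : phylo_tree n).

Definition is_leaf (u : T) : bool := [forall v, ~~ @pt_child n T u v].
Definition is_internal (u : T) : bool := ~~ is_leaf u.

Definition is_height (u : T) (k : nat) : Prop :=
  (exists p : seq T, [/\ path (@pt_child n T) u p, is_leaf (last u p) & size p = k]) /\
  (forall p : seq T, path (@pt_child n T) u p -> is_leaf (last u p) -> size p <= k).

(* min{l x : x child of u} < min{l x : x child of v}, written out *)
Definition min_child_lt (l : T -> nat) (u v : T) : Prop :=
  exists2 c, @pt_child n T u c & forall d, @pt_child n T v d -> l c < l d.

Definition bottom_up (l : T -> nat) : Prop :=
  [/\ injective l,
      (forall v, 1 <= l v <= #|T|),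
      (forall i : 'I_n, l (pt_leaf T i) = i.+1),
      (forall u v hu hv, is_height u hu -> is_height v hv -> hu < hv -> l u < l v)
    & (forall u v h, is_height u h -> is_height v h -> 0 < h ->
         min_child_lt l u v -> l u < l v)].

Definition matching (l : T -> nat) : {fset {fset nat}} :=
  [fset [fset l x | x in [pred x | @pt_child n T u x]] | u in [pred u | is_internal u]].

End Defs.

Definition phylo_iso n (T1 T2 : phylo_tree n) : Prop :=
  exists f : T1 -> T2,
    [/\ bijective f,
        (forall u v, @pt_child n T2 (f u) (f v) = @pt_child n T1 u v)
      & (forall i, f (pt_leaf T1 i) = pt_leaf T2 i)].

From mathcomp Require Import all_boot finmap.
Set Implicit Arguments. Unset Strict Implicit. Unset Printing Implicit Defensive.
Local Open Scope fset_scope.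

(* Write C(u) for the set of labels of the children of u, so that M(T) is the
   set of the C(u) for u internal.  By induction on k, nodes of T1 and T2 with
   the same label j < k have the same C and the same height.  For an internal
   node labelled k in both trees, say y1 and y2, C(y1) is a block of M, hence
   C(y1) = C(w2) for some w2 in T2; by induction w2 cannot have a label below
   k, and if C(y1) <> C(y2) it has a label above k.  Symmetrically C(y2) = C(w1)
   with l1 w1 > k.  Heights are determined by the children's labels, so
   y1, y2, w1, w2 all have the same height, and whichever of the disjoint sets
   C(y1), C(y2) has the smaller minimum violates the tie-break rule (c) in one
   of the two trees.  Finally both trees have n + |M| nodes, so identifying
   equal labels is a bijection, which preserves arcs and leaves. *)

Section PhyloTree.
Variables (n : nat) (T : phylo_tree n).
Local Notation child := (@pt_child n T).

Lemma child_neq_root w v : child w v -> v != pt_root T.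
Proof. by apply: contraTneq => ->; apply: pt_root_noparent. Qed.

Lemma parent_uniq w1 w2 v : child w1 v -> child w2 v -> w1 = w2.
Proof.
move=> w1v w2v; have [u [_ parent_u]] := pt_parent_unique (child_neq_root w1v).
by rewrite -(parent_u _ w1v) (parent_u _ w2v).
Qed.

Definition on_cycle v := exists q, path child v (rcons q v).

Lemma on_cycle_parent w v : child w v -> on_cycle v -> on_cycle w.
Proof.
move=> wv [q]; rewrite rcons_path => /andP[vq qv].
by rewrite (parent_uniq wv qv); exists (belast v q); rewrite -lastI /= vq qv.
Qed.

Lemma not_on_cycle v : ~ on_cycle v.
Proof.
have [p rp ->] := connectP (pt_reach v).
elim/last_ind: p rp => [_ [q] | p x IHp].
  by rewrite rcons_path (negbTE (pt_root_noparent _)) andbF.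
rewrite rcons_path last_rcons => /andP[rp px] /(on_cycle_parent px).
exact: IHp.
Qed.

Lemma child_path_uniq u p : path child u p -> uniq (u :: p).
Proof.
elim: p u => [//|x p IHp] u up.
rewrite cons_uniq IHp ?andbT; last by case/andP: up.
apply/negP => u_in; move: up; case/splitPr: u_in => p1 p2.
rewrite cat_path => /andP[up1 /andP[p1u _]].
by apply: (@not_on_cycle u); exists p1; rewrite rcons_path up1.
Qed.

Lemma child_path_size u p : path child u p -> size p < #|T|.
Proof. by move/child_path_uniq/card_uniqP => /= <-; apply: max_card. Qed.

Lemma card_leaves : #|[pred u : T | is_leaf u]| = n.
Proof.
rewrite -[RHS]card_ord -(card_codom (@pt_leaf_inj n T)); apply: eq_card => u /=.
apply/forallP/codomP => [/pt_leaf_onto[i ->] | [i -> v]]; [by exists i | exact: pt_leaf_leaf].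
Qed.

Definition height u : nat :=
  \max_(k < #|T| | [exists t : k.-tuple T, path child u t]) k.

Lemma path_size_le_height u p : path child u p -> size p <= height u.
Proof.
move=> up; apply: (@leq_bigmax_cond _ _ _ (Ordinal (child_path_size up))).
by apply/existsP; exists (in_tuple p).
Qed.

Lemma exists_height_path u : exists2 p, path child u p & size p = height u.
Proof.
have T_gt0 : 0 < #|T| by apply/card_gt0P; exists u.
have nil_path : [exists t : 0.-tuple T, path child u t] by apply/existsP; exists [tuple].
rewrite /height (bigmax_eq_arg (Ordinal T_gt0)) //.
by case: arg_maxnP => // k /existsP[t ut] _; exists t; rewrite ?size_tuple.
Qed.

Lemma leafP u : reflect (forall v, ~~ child u v) (is_leaf u).
Proof. exact: forallP. Qed.

Lemma internalP u : reflect (exists v, child u v) (is_internal u).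
Proof. by apply: (iffP forallPn) => -[v]; rewrite ?negbK; exists v; rewrite ?negbK. Qed.

Lemma heightP u : is_height u (height u).
Proof.
split=> [|p up _]; last exact: path_size_le_height.
have [p up size_p] := exists_height_path u; exists p; split=> //.
apply/leafP => v; apply/negP => last_v.
have := @path_size_le_height u (rcons p v).
by rewrite rcons_path up last_v size_rcons size_p ltnn => /(_ isT).
Qed.

Lemma height_child_lt u c : child u c -> height c < height u.
Proof.
move=> uc; have [[p [cp _ <-]] _] := heightP c.
by apply: (@path_size_le_height u (c :: p)); rewrite /= uc.
Qed.

Lemma height_leaf u : is_leaf u -> height u = 0.
Proof.
move/leafP => u_leaf; have [[//|c p] /andP[uc _] _] := exists_height_path u.
by have := u_leaf c; rewrite uc.
Qed.

Lemma height_internal u : is_internal u -> exists2 c, child u c & height u = (height c).+1.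
Proof.
move/internalP => [v uv]; have [[|c p] up size_p] := exists_height_path u.
  by have := height_child_lt uv; rewrite -size_p.
case/andP: up => uc cp; exists c => //.
apply/anti_leq; rewrite height_child_lt // andbT -size_p /= ltnS.
exact: path_size_le_height.
Qed.

Lemma height_gt0 u : (0 < height u) = is_internal u.
Proof.
rewrite /is_internal; have [u_leaf | u_int] := boolP (is_leaf u).
  by rewrite height_leaf.
by have [c _ ->] := height_internal u_int.
Qed.

End PhyloTree.

Definition min_lt (A B : {fset nat}) := exists2 a, a \in A & {in B, forall b, a < b}.

Lemma min_lt_total (A B : {fset nat}) a :
  a \in A -> {in A, forall x, x \notin B} -> min_lt A B \/ min_lt B A.
Proof.
move=> aA AB; have exAB : exists m, (m \in A) || (m \in B) by exists a; rewrite aA.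
case: (ex_minnP exAB) => m /orP[mA | mB] m_min; [left | right]; exists m => // x xAB;
  rewrite ltn_neqAle m_min ?xAB ?orbT // andbT.
- by apply: contraTneq xAB => <-; apply: AB.
- by apply: contraTneq mB => ->; apply: AB.
Qed.

Section Labelling.
Variables (n : nat) (T : phylo_tree n) (l : T -> nat).
Local Notation child := (@pt_child n T).

Definition children_labels u : {fset nat} := [fset l x | x in [pred x | child u x]].

Lemma children_labelsP u j :
  reflect (exists2 x, child u x & j = l x) (j \in children_labels u).
Proof. by apply: (iffP (imfsetP _ _ _ _)) => -[x ux ->]; exists x. Qed.

Lemma children_labels_leaf u : is_leaf u -> children_labels u = fset0.
Proof.
move/leafP => u_leaf; apply/fsetP => j; rewrite inE.
by apply/children_labelsP => -[x ux _]; have := u_leaf x; rewrite ux.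
Qed.

Lemma children_labels_internal u : is_internal u -> exists j, j \in children_labels u.
Proof. by case/internalP => x ux; exists (l x); apply/children_labelsP; exists x. Qed.

Lemma matchingP B :
  reflect (exists2 u, is_internal u & B = children_labels u) (B \in matching l).
Proof. by apply: (iffP (imfsetP _ _ _ _)) => -[u u_int ->]; exists u. Qed.

Lemma mem_matching u : is_internal u -> children_labels u \in matching l.
Proof. by move=> u_int; apply/matchingP; exists u. Qed.

Hypothesis l_inj : injective l.

Lemma mem_children_labels u x : (l x \in children_labels u) = child u x.
Proof.
by apply/children_labelsP/idP => [[y uy /l_inj ->] | ux] //; exists x.
Qed.

Lemma children_labels_parent_uniq u v j :
  j \in children_labels u -> j \in children_labels v -> u = v.
Proof.
by case/children_labelsP => x ux ->; rewrite mem_children_labels; apply: parent_uniq.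
Qed.

Lemma card_matching : #|T| = (n + #|` matching l|)%N.
Proof.
rewrite card_in_imfset => [|u v /= u_int _ e_uv]; last first.
  have [j ju] := children_labels_internal u_int.
  by apply: (children_labels_parent_uniq ju); rewrite /children_labels -e_uv.
rewrite /= -cardE -(cardC [pred u | is_leaf u]) card_leaves.
by congr (_ + _)%N; apply: eq_card.
Qed.

End Labelling.

Section BottomUp.
Variables (n : nat) (T : phylo_tree n) (l : T -> nat).
Hypothesis l_bu : bottom_up l.
Local Notation child := (@pt_child n T).

Lemma bottom_up_inj : injective l. Proof. by case: l_bu. Qed.

Lemma bottom_up_range u : 0 < l u <= #|T|. Proof. by case: l_bu. Qed.

Lemma bottom_up_leaf i : l (pt_leaf T i) = i.+1. Proof. by case: l_bu. Qed.

Lemma bottom_up_height_lt u v : height u < height v -> l u < l v.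
Proof. by case: l_bu => _ _ _ height_lt _; apply: height_lt (heightP u) (heightP v). Qed.

Lemma bottom_up_child_lt u c : child u c -> l c < l u.
Proof. by move/height_child_lt; apply: bottom_up_height_lt. Qed.

Lemma children_labels_lt u : {in children_labels l u, forall j, j < l u}.
Proof. by move=> j /children_labelsP[c uc ->]; apply: bottom_up_child_lt. Qed.

Lemma bottom_up_tie u v : 0 < height u -> height u = height v ->
  min_lt (children_labels l u) (children_labels l v) -> l u < l v.
Proof.
case: l_bu => _ _ _ _ tie h_gt0 e_uv [_ /children_labelsP[c uc ->] c_min].
apply: tie (heightP u) _ h_gt0 _; first by rewrite e_uv; apply: heightP.
by exists c => // d vd; apply: c_min; rewrite (mem_children_labels bottom_up_inj).
Qed.

Lemma bottom_up_onto k : 0 < k <= #|T| -> exists x, l x = k.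
Proof.
move=> k_range.
have uniq_l : uniq (map l (enum T)) by rewrite (map_inj_uniq bottom_up_inj) enum_uniq.
have sub_l : {subset map l (enum T) <= iota 1 #|T|}.
  by move=> j /mapP[x _ ->]; rewrite mem_iota add1n ltnS bottom_up_range.
have [|_ e_l] := uniq_min_size uniq_l sub_l; first by rewrite size_iota size_map -cardE.
have : k \in iota 1 #|T| by rewrite mem_iota add1n ltnS.
by rewrite -e_l => /mapP[x _ ->]; exists x.
Qed.

Lemma is_leaf_label u : is_leaf u = (l u <= n).
Proof.
apply/idP/idP => [/leafP/pt_leaf_onto[i ->] | u_le]; first by rewrite bottom_up_leaf.
have /andP[u_gt0 _] := bottom_up_range u.
have i_lt : (l u).-1 < n by rewrite prednK.
have e_u : l (pt_leaf T (Ordinal i_lt)) = l u by rewrite bottom_up_leaf /= prednK.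
by rewrite -(bottom_up_inj e_u); apply/leafP => v; apply: pt_leaf_leaf.
Qed.

Lemma is_internal_label u : is_internal u = (n < l u).
Proof. by rewrite /is_internal is_leaf_label ltnNge. Qed.

End BottomUp.

Definition agree_below n (T1 T2 : phylo_tree n) (l1 : T1 -> nat) (l2 : T2 -> nat) k :=
  forall y1 y2, l1 y1 < k -> l1 y1 = l2 y2 ->
    children_labels l1 y1 = children_labels l2 y2 /\ height y1 = height y2.

Lemma agree_below_sym n (T1 T2 : phylo_tree n) (l1 : T1 -> nat) (l2 : T2 -> nat) k :
  agree_below l1 l2 k -> agree_below l2 l1 k.
Proof.
move=> agree_k y2 y1 y2_lt e21; rewrite e21 in y2_lt.
by have [-> ->] := agree_k y1 y2 y2_lt (esym e21).
Qed.

Section Transfer.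
Variables (n : nat) (T1 T2 : phylo_tree n) (l1 : T1 -> nat) (l2 : T2 -> nat).
Hypotheses (bu1 : bottom_up l1) (bu2 : bottom_up l2).

Lemma height_le_of_children_labels k x1 x2 :
  agree_below l1 l2 k -> {in children_labels l1 x1, forall j, j < k} ->
  children_labels l1 x1 = children_labels l2 x2 -> height x1 <= height x2.
Proof.
move=> agree_k lt_k e12; have [x1_leaf | x1_int] := boolP (is_leaf x1).
  by rewrite height_leaf.
have [c1 x1c1 ->] := height_internal x1_int.
have c1_x1 : l1 c1 \in children_labels l1 x1.
  by rewrite (mem_children_labels (bottom_up_inj bu1)).
move: (c1_x1); rewrite e12 => /children_labelsP[c2 x2c2 e_c].
have [_ ->] := agree_k c1 c2 (lt_k _ c1_x1) e_c.
exact: height_child_lt.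
Qed.

Lemma label_le_of_children_labels x1 w2 :
  agree_below l1 l2 (l1 x1) -> is_internal x1 ->
  children_labels l2 w2 = children_labels l1 x1 -> l1 x1 <= l2 w2.
Proof.
move=> agree_x1 x1_int e21; rewrite leqNgt; apply/negP => w2_lt.
have /andP[w2_gt0 _] := bottom_up_range bu2 w2.
have /andP[_ x1_le] := bottom_up_range bu1 x1.
have [|w1 e_w] := bottom_up_onto bu1 (k := l2 w2).
  by rewrite w2_gt0 (leq_trans (ltnW w2_lt)).
rewrite -e_w in w2_lt; have [e_cl _] := agree_x1 w1 w2 w2_lt e_w.
have [j j_x1] := children_labels_internal l1 x1_int.
have w1_x1 : w1 = x1.
  by apply: (children_labels_parent_uniq (bottom_up_inj bu1) _ j_x1); rewrite e_cl e21.
by move: w2_lt; rewrite w1_x1 ltnn.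
Qed.

End Transfer.

Section Agreement.
Variables (n : nat) (T1 T2 : phylo_tree n) (l1 : T1 -> nat) (l2 : T2 -> nat).
Hypotheses (bu1 : bottom_up l1) (bu2 : bottom_up l2) (hM : matching l1 = matching l2).

Lemma height_eq_of_children_labels k x1 x2 :
  agree_below l1 l2 k -> {in children_labels l1 x1, forall j, j < k} ->
  children_labels l1 x1 = children_labels l2 x2 -> height x1 = height x2.
Proof.
move=> agree_k lt_k e12; apply/anti_leq.
rewrite (height_le_of_children_labels bu1 agree_k lt_k e12).
by rewrite (height_le_of_children_labels bu2 (agree_below_sym agree_k)) // -e12.
Qed.

Lemma displaced_block y1 y2 :
  agree_below l1 l2 (l1 y1) -> is_internal y1 -> l2 y2 = l1 y1 ->
  children_labels l1 y1 != children_labels l2 y2 ->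
  exists2 w2, children_labels l2 w2 = children_labels l1 y1 &
    [/\ l1 y1 < l2 w2, height w2 = height y1 & height y2 <= height y1].
Proof.
move=> agree_y1 y1_int e21 ne_cl.
have : children_labels l1 y1 \in matching l2 by rewrite -hM mem_matching.
case/matchingP => w2 _ e_w2; exists w2 => //.
have w2_gt : l1 y1 < l2 w2.
  rewrite ltn_neqAle (label_le_of_children_labels bu1 bu2 agree_y1 y1_int) // andbT.
  apply: contra ne_cl => /eqP e_lab; rewrite e_w2.
  by have -> : w2 = y2 by apply: (bottom_up_inj bu2); rewrite -e_lab e21.
have hw2 : height w2 = height y1.
  by rewrite (height_eq_of_children_labels agree_y1 (children_labels_lt bu1 (u := y1)) e_w2).
split=> //; rewrite -hw2 leqNgt; apply: contraL w2_gt => /(bottom_up_height_lt bu2).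
by rewrite e21 -leqNgt => /ltnW.
Qed.

End Agreement.

Section Induction.
Variables (n : nat) (T1 T2 : phylo_tree n) (l1 : T1 -> nat) (l2 : T2 -> nat).
Hypotheses (bu1 : bottom_up l1) (bu2 : bottom_up l2) (hM : matching l1 = matching l2).

Lemma agree_below_succ k : agree_below l1 l2 k -> agree_below l1 l2 k.+1.
Proof.
move=> agree_k y1 y2; rewrite ltnS leq_eqVlt => /predU1P[e_k | lt_k] e12; last exact: agree_k.
subst k; have [y1_leaf | y1_int] := boolP (is_leaf y1).
  have y2_leaf : is_leaf y2 by rewrite (is_leaf_label bu2) -e12 -(is_leaf_label bu1).
  by rewrite !children_labels_leaf ?height_leaf.
suff e_cl : children_labels l1 y1 = children_labels l2 y2.
  split=> //; apply: (height_eq_of_children_labels bu1 bu2 agree_k _ e_cl).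
  exact: children_labels_lt.
have y2_int : is_internal y2 by rewrite (is_internal_label bu2) -e12 -(is_internal_label bu1).
have agree_k' : agree_below l2 l1 (l2 y2) by rewrite -e12; apply: agree_below_sym.
apply/eqP; apply: contraT => ne_cl.
have [w2 e_w2 [w2_gt hw2 hy2]] := displaced_block bu1 bu2 hM agree_k y1_int (esym e12) ne_cl.
have ne_cl' : children_labels l2 y2 != children_labels l1 y1 by rewrite eq_sym.
have [w1 e_w1 [w1_gt hw1 hy1]] := displaced_block bu2 bu1 (esym hM) agree_k' y2_int e12 ne_cl'.
have e_h : height y1 = height y2 by apply/anti_leq; rewrite hy1 hy2.
have h_gt0 : 0 < height y1 by rewrite height_gt0.
have [j j_y1] := children_labels_internal l1 y1_int.
have disj : {in children_labels l1 y1, forall i, i \notin children_labels l2 y2}.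
  move=> i i_y1; rewrite -e_w1; apply/negP.
  move/(children_labels_parent_uniq (bottom_up_inj bu1) i_y1) => e_y1w1.
  by move: w1_gt; rewrite -e_y1w1 e12 ltnn.
case: (min_lt_total j_y1 disj) => [min12 | min21].
- have : l2 w2 < l2 y2 by apply: (bottom_up_tie bu2); rewrite ?hw2 ?e_w2.
  by rewrite -e12 ltnNge (ltnW w2_gt).
- have : l1 w1 < l1 y1 by apply: (bottom_up_tie bu1); rewrite ?hw1 ?e_w1 -?e_h.
  by rewrite e12 ltnNge (ltnW w1_gt).
Qed.

Lemma children_labels_eq_of_label y1 y2 :
  l1 y1 = l2 y2 -> children_labels l1 y1 = children_labels l2 y2.
Proof.
move=> e12; have agree_all k : agree_below l1 l2 k.
  by elim: k => [y1' y2' // | k]; apply: agree_below_succ.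
by case: (agree_all (l1 y1).+1 y1 y2 (ltnSn _) e12).
Qed.

End Induction.

Theorem corollary2 (n : nat) (T1 T2 : phylo_tree n)
    (l1 : T1 -> nat) (l2 : T2 -> nat) :
  bottom_up l1 -> bottom_up l2 ->
  matching l1 = matching l2 ->
  phylo_iso T1 T2.
Proof.
move=> bu1 bu2 hM.
have card12 : #|T1| = #|T2|.
  by rewrite (card_matching (bottom_up_inj bu1)) hM -(card_matching (bottom_up_inj bu2)).
have ex_f x1 : exists x2, l2 x2 == l1 x1.
  have [|x2 <-] := bottom_up_onto bu2 (k := l1 x1); last by exists x2.
  by rewrite -card12 bottom_up_range.
pose f x1 := xchoose (ex_f x1).
have l_f x1 : l2 (f x1) = l1 x1 := eqP (xchooseP (ex_f x1)).
exists f; split.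
- apply: inj_card_bij; last by rewrite card12.
  by move=> x y /(congr1 l2); rewrite !l_f; apply: bottom_up_inj.
- move=> u v; rewrite -(mem_children_labels (bottom_up_inj bu2)) l_f.
  rewrite -(children_labels_eq_of_label bu1 bu2 hM (esym (l_f u))).
  exact: (mem_children_labels (bottom_up_inj bu1)).
- by move=> i; apply: (bottom_up_inj bu2); rewrite l_f !bottom_up_leaf.
Qed.
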